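(* Let $\mu$ be a finite non-negative Borel measure on $\mathbb{R}$ and let $i\ge 0$. Then for every $z=x+iy$ with $y>0$ and $x>0$, $$|G_\mu(z)|<\frac{2\mu(\mathbb{R})}{|x|}+\frac{2^{i}\int_{\mathbb{R}}|t|^i\,d\mu(t)}{y|x|^i}.$$
   Context: $G_\mu(z)=\int_{\mathbb{R}}\frac{1}{z-t}\,d\mu(t)$ for $z$ in the open upper half-plane is the Cauchy transform of $\mu$. *)

From HB Require Import structures.
From mathcomp Require Import all_boot all_order all_algebra.
From mathcomp Require Import all_classical all_reals all_analysis.
From mathcomp Require Import complex.
Set Implicit Arguments. Unset Strict Implicit. Unset Printing Implicit Defensive.
Import Order.TTheory GRing.Theory Num.Theory.
Import numFieldNormedType.Exports.
Local Open Scope ring_scope.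
Local Open Scope complex_scope.

(* Cauchy transform G_mu(z) = \int_R 1/(z - t) d mu(t), a complex-valued
   integral defined componentwise (real and imaginary parts integrated
   separately with the real-valued Lebesgue integral [Rintegral]). *)
Definition cauchy_transform (R : realType)
    (mu : {measure set (measurableTypeR R) -> \bar R}) (z : R[i]) : R[i] :=
  (Rintegral mu setT (fun t : R => complex.Re ((z - t%:C)^-1))) +i*
  (Rintegral mu setT (fun t : R => complex.Im ((z - t%:C)^-1))).

Definition cmod (R : realType) (z : R[i]) : R :=
  Num.sqrt (complex.Re z ^+ 2 + complex.Im z ^+ 2).

From HB Require Import structures.
From mathcomp Require Import all_boot all_order all_algebra.
From mathcomp Require Import all_classical all_reals all_analysis.
From mathcomp Require Import complex measurable_realfun.
From mathcomp Require Import lra.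
Set Implicit Arguments. Unset Strict Implicit. Unset Printing Implicit Defensive.
Import Order.TTheory GRing.Theory Num.Theory.
Import numFieldNormedType.Exports.
Local Open Scope ring_scope.
Local Open Scope complex_scope.

(* Write G = A + iB for the Cauchy transform at z = x + iy.  Integrating the
   pointwise Cauchy-Schwarz bound A Re k + B Im k <= |G| |k| for the kernel
   k(t) = 1/(z - t) gives |G|^2 <= |G| \int |k| dmu, hence |G| <= \int |k| dmu.
   Split R at |t| = x/2: for |t| <= x/2 we have |z - t| >= sqrt(x^2/4 + y^2) > x/2,
   and for |t| > x/2 we have |k(t)| <= 1/y <= (2|t|/x)^i / y.  Integrating the
   sum of both bounds gives the claim, strictly because mu(R) > 0. *)

Lemma ler_dot2 (R : rcfType) (a b u v : R) :
  a * u + b * v <= Num.sqrt (a ^+ 2 + b ^+ 2) * Num.sqrt (u ^+ 2 + v ^+ 2).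
Proof.
rewrite -sqrtrM ?addr_ge0 ?sqr_ge0 // (le_trans (ler_norm _)) // -sqrtr_sqr.
by apply: ler_wsqrtr; have := sqr_ge0 (a * v - b * u); nra.
Qed.

Lemma measurable_funV_gt0 d (T : measurableType d) (R : realType) (f : T -> R) :
  measurable_fun setT f -> (forall t, 0 < f t) ->
  measurable_fun setT (fun t => (f t)^-1).
Proof.
move=> mf f_gt0.
have -> : (fun t => (f t)^-1) = (fun t => expR (- ln (f t))).
  by apply/funext => t; rewrite expRN lnK // posrE.
apply: measurableT_comp; first exact: measurable_expR.
apply: measurableT_comp; first exact: oppr_measurable.
by apply: measurableT_comp => //; exact: measurable_ln.
Qed.

Section integrable_bounds.
Context d (T : measurableType d) (R : realType).
Variables (mu : {measure set T -> \bar R}) (D : set T).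
Hypothesis mD : measurable D.

Lemma integrable_cst_lty (k : R) :
  (mu D < +oo)%E -> mu.-integrable D (EFin \o cst k).
Proof.
move=> muD_fin; apply: measurable_bounded_integrable => //.
by exists `|k|; split=> [|M kM t _]; [exact: num_real | exact: ltW].
Qed.

Lemma sqrt_Rintegral2_le (u v g : T -> R) :
  mu.-integrable D (EFin \o u) -> mu.-integrable D (EFin \o v) ->
  mu.-integrable D (EFin \o g) ->
  (forall t, D t -> Num.sqrt (u t ^+ 2 + v t ^+ 2) <= g t) ->
  Num.sqrt ((\int[mu]_(t in D) u t) ^+ 2 + (\int[mu]_(t in D) v t) ^+ 2)
    <= \int[mu]_(t in D) g t.
Proof.
move=> iu iv ig uvg.
set A := \int[mu]_(t in D) u t; set B := \int[mu]_(t in D) v t.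
set S := Num.sqrt _.
have iZ f k : mu.-integrable D (EFin \o f) ->
    mu.-integrable D (EFin \o (fun t => k * f t)).
  by move=> /(integrableZl mD k); apply: eq_integrable.
have iuv : mu.-integrable D (EFin \o (fun t => A * u t + B * v t)).
  by apply: eq_integrable (integrableD mD (iZ _ A iu) (iZ _ B iv)).
have S2 : S ^+ 2 = \int[mu]_(t in D) (A * u t + B * v t).
  rewrite RintegralD ?iZ // !RintegralZl //.
  by rewrite sqr_sqrtr ?addr_ge0 ?sqr_ge0 // !expr2.
have : S ^+ 2 <= S * \int[mu]_(t in D) g t.
  rewrite S2 -RintegralZl //; apply: le_Rintegral => //; first exact: iZ.
  move=> t Dt; apply: le_trans (ler_dot2 A B (u t) (v t)) _.
  by rewrite ler_wpM2l ?sqrtr_ge0 ?uvg.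
have g_ge0 : 0 <= \int[mu]_(t in D) g t.
  by apply: Rintegral_ge0 => t Dt; exact: le_trans (sqrtr_ge0 _) (uvg t Dt).
have [->|S_neq0] := eqVneq S 0 => // S2_le.
by rewrite -(ler_pM2l (_ : 0 < S)) -?expr2 // lt_neqAle eq_sym S_neq0 sqrtr_ge0.
Qed.

End integrable_bounds.

Section cmod_theory.
Variable R : realType.
Implicit Types z : R[i].

Lemma cmodV z : cmod z^-1 = (cmod z)^-1.
Proof.
have cmodE w : cmod w = Normc.normc w by case: w.
by rewrite !cmodE Normc.normcV.
Qed.

Lemma normr_Re_le_cmod z : `|complex.Re z| <= cmod z.
Proof.
by rewrite -sqrtr_sqr ler_wsqrtr // lerDl sqr_ge0.
Qed.

Lemma normr_Im_le_cmod z : `|complex.Im z| <= cmod z.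
Proof.
by rewrite -sqrtr_sqr ler_wsqrtr // lerDr sqr_ge0.
Qed.

Lemma cmodV_le_invIm z : 0 < complex.Im z -> cmod z^-1 <= (complex.Im z)^-1.
Proof.
move=> Imz_gt0; have Im_le := le_trans (ler_norm _) (normr_Im_le_cmod z).
by rewrite cmodV lef_pV2 ?posrE // (lt_le_trans Imz_gt0).
Qed.

End cmod_theory.

Section cauchy_kernel.
Variables (R : realType) (mu : {measure set (measurableTypeR R) -> \bar R}).
Hypothesis mu_fin : (mu setT < +oo)%E.
Variable z : R[i].
Hypothesis Imz_gt0 : 0 < complex.Im z.

Let a := complex.Re z.
Let b := complex.Im z.
Let den (t : R) := (a - t) ^+ 2 + b ^+ 2.

Let den_gt0 t : 0 < den t.
Proof. by rewrite ltr_wpDl ?sqr_ge0 ?exprn_gt0. Qed.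

Let measurable_den_inv : measurable_fun setT (fun t => (den t)^-1).
Proof.
apply: measurable_funV_gt0 den_gt0.
by apply: measurable_funD => //; apply: measurable_funX; exact: measurable_funB.
Qed.

Let cauchy_kernelE t : (z - t%:C)^-1 = ((a - t) / den t) +i* (- (b / den t)).
Proof.
rewrite /den /a /b; case: z => p q.
by apply/eqP; rewrite eq_complex /= subr0 !eqxx.
Qed.

Let Im_sub_real t : complex.Im (z - t%:C) = b.
Proof. by rewrite /b; case: z => p q /=; rewrite subr0. Qed.

Let integrable_bounded_kernel (f : R -> R) : measurable_fun setT f ->
  (forall t, `|f t| <= cmod (z - t%:C)^-1) -> mu.-integrable setT (EFin \o f).
Proof.
move=> mf f_le; apply: measurable_bounded_integrable => //.
exists b^-1; split=> [|M bM t _]; first exact: num_real.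
apply: le_trans (f_le t) (le_trans _ (ltW bM)).
by rewrite -(Im_sub_real t) cmodV_le_invIm // Im_sub_real.
Qed.

Lemma integrable_Re_cauchy_kernel :
  mu.-integrable setT (EFin \o (fun t => complex.Re (z - t%:C)^-1)).
Proof.
apply: integrable_bounded_kernel => [|t]; last exact: normr_Re_le_cmod.
under eq_fun do rewrite cauchy_kernelE /=.
by apply: measurable_funM => //; exact: measurable_funB.
Qed.

Lemma integrable_Im_cauchy_kernel :
  mu.-integrable setT (EFin \o (fun t => complex.Im (z - t%:C)^-1)).
Proof.
apply: integrable_bounded_kernel => [|t]; last exact: normr_Im_le_cmod.
under eq_fun do rewrite cauchy_kernelE /=.
by apply: measurable_funN; apply: measurable_funM.
Qed.

Lemma cmod_cauchy_transform_le (g : R -> R) :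
  mu.-integrable setT (EFin \o g) ->
  (forall t, cmod (z - t%:C)^-1 <= g t) ->
  cmod (cauchy_transform mu z) <= \int[mu]_(t in setT) g t.
Proof.
move=> ig kernel_le_g.
apply: sqrt_Rintegral2_le => //.
- exact: integrable_Re_cauchy_kernel.
- exact: integrable_Im_cauchy_kernel.
- by move=> t _; exact: kernel_le_g.
Qed.

End cauchy_kernel.

Lemma cmod_cauchy_kernel_le (R : realType) (x y i t : R) :
  0 < x -> 0 < y -> 0 <= i ->
  cmod (x +i* y - t%:C)^-1 <=
    (Num.sqrt ((x / 2) ^+ 2 + y ^+ 2))^-1 + 2 `^ i / (y * x `^ i) * `|t| `^ i.
Proof.
move=> x_gt0 y_gt0 i_ge0.
have cmodE : cmod (x +i* y - t%:C) = Num.sqrt ((x - t) ^+ 2 + y ^+ 2).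
  by rewrite /cmod /= subr0.
have sqrt_gt0 : 0 < Num.sqrt ((x / 2) ^+ 2 + y ^+ 2).
  by rewrite sqrtr_gt0 ltr_wpDl ?sqr_ge0 ?exprn_gt0.
have c_ge0 : 0 <= 2 `^ i / (y * x `^ i) * `|t| `^ i.
  by rewrite !mulr_ge0 ?invr_ge0 ?mulr_ge0 ?powR_ge0 ?ltW.
have [t_le|t_gt] := lerP `|t| (x / 2).
  have le_cmod : Num.sqrt ((x / 2) ^+ 2 + y ^+ 2) <= cmod (x +i* y - t%:C).
    rewrite cmodE ler_sqrt ?addr_ge0 ?sqr_ge0 // lerD2r.
    have := ler_norm t; nra.
  apply: ler_wpDr => //.
  by rewrite cmodV lef_pV2 ?posrE // (lt_le_trans sqrt_gt0).
apply: ler_wpDl; first by rewrite invr_ge0 ltW.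
have Im_gt0 : 0 < complex.Im (x +i* y - t%:C) by rewrite /= subr0.
apply: le_trans (cmodV_le_invIm Im_gt0) _; rewrite /= subr0.
rewrite mulrAC -powRM ?normr_ge0 // ler_pdivlMr ?mulr_gt0 ?powR_gt0 //.
rewrite mulrA mulVf ?gt_eqF // mul1r.
by rewrite ge0_ler_powR ?nnegrE ?mulr_ge0 ?(ltW x_gt0) //; lra.
Qed.

Lemma inv_sqrt_half_lt (R : rcfType) (x y : R) : 0 < x -> 0 < y ->
  (Num.sqrt ((x / 2) ^+ 2 + y ^+ 2))^-1 < 2 / x.
Proof.
move=> x_gt0 y_gt0; have half_x_gt0 : 0 < x / 2 by rewrite divr_gt0.
have den_gt0 : 0 < (x / 2) ^+ 2 + y ^+ 2 by rewrite ltr_wpDl ?sqr_ge0 ?exprn_gt0.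
rewrite -[2 / x]invf_div ltf_pV2 ?posrE ?sqrtr_gt0 //.
by rewrite -{1}(gtr0_norm half_x_gt0) -sqrtr_sqr ltr_sqrt // ltrDl exprn_gt0.
Qed.

Lemma integrable_normr_powR (R : realType)
    (mu : {measure set (measurableTypeR R) -> \bar R}) (i : R) :
  (\int[mu]_t (`|t| `^ i)%:E < +oo)%E ->
  mu.-integrable setT (EFin \o (fun t => `|t| `^ i)).
Proof.
move=> fin_int; apply/integrableP; split.
  apply/measurable_EFinP.
  exact: (measurableT_comp (measurable_powR i) (@normr_measurable R setT)).
by under eq_integral do rewrite /= ger0_norm ?powR_ge0 //.
Qed.

Theorem proposition2 (R : realType)
    (mu : {measure set (measurableTypeR R) -> \bar R})
    (mu_fin : (mu setT < +oo)%E) (mu_nz : (0 < mu setT)%E)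
    (i : R) (hi : 0 <= i) (x y : R) (hx : 0 < x) (hy : 0 < y) :
  ((cmod (cauchy_transform mu (x +i* y)))%:E <
     (2 * fine (mu setT) / `|x|)%:E +
     ((2 `^ i) / (y * `|x| `^ i))%:E * (\int[mu]_t (`|t| `^ i)%:E))%E.
Proof.
rewrite gtr0_norm //.
set c := 2 `^ i / (y * x `^ i).
set J := (\int[mu]_t (`|t| `^ i)%:E)%E.
have [->|J_neq_oo] := eqVneq J +oo%E.
  by rewrite mulry gtr0_sg ?divr_gt0 ?mulr_gt0 ?powR_gt0 // mul1e addey // ltry.
have J_fin : J \is a fin_num.
  by rewrite ge0_fin_numE ?ltey // integral_ge0 // => t _; rewrite lee_fin powR_ge0.
have ipow : mu.-integrable setT (EFin \o (fun t => `|t| `^ i)).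
  by apply: integrable_normr_powR; rewrite ltey.
have icpow : mu.-integrable setT (EFin \o (fun t => c * `|t| `^ i)).
  by apply: eq_integrable (integrableZl _ c ipow).
set m := (Num.sqrt ((x / 2) ^+ 2 + y ^+ 2))^-1.
have icst : mu.-integrable setT (EFin \o cst m) by exact: integrable_cst_lty.
have ibound : mu.-integrable setT (EFin \o (fun t => m + c * `|t| `^ i)).
  by apply: eq_integrable (integrableD _ icst icpow).
rewrite -(fineK J_fin) -EFinM -EFinD lte_fin.
apply: le_lt_trans (cmod_cauchy_transform_le mu_fin _ ibound _) _ => //.
  by move=> t; exact: cmod_cauchy_kernel_le.
rewrite (RintegralD _ icst icpow) // Rintegral_cst // RintegralZl // ltrD2r.
have M_gt0 : 0 < fine (mu setT) by rewrite fine_gt0 // mu_nz.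
by rewrite mulrAC ltr_pM2r // inv_sqrt_half_lt.
Qed.
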